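(* The function $\tilde f$ is continuous at every point of $\mathbf{R}\setminus\mathbf{Q}$, and $$\lim_{x\to0^+,\ x\notin\mathbf{Q}}\tilde f(x)=1,\qquad \lim_{x\to\frac12^-,\ x\notin\mathbf{Q}}\tilde f(x)=0.$$
   Context: Let $A(y)=1/y-\lfloor 1/y\rfloor$ be the Gauss map. Define $w$ on irrationals $y\in(0,\tfrac12)$ by $w(y)=\frac{y}{2}\log\frac{1-y}{y}-\log(1-y)$, and extend $w$ to all irrationals as an even $1$-periodic function (so $w(y)=w(1-y)$ for irrational $y\in(\tfrac12,1)$); this $w$ coincides with the even part $W^+$ of the Wilton function. For irrational $x\in(0,\tfrac12)$ let $n=\lfloor 1/x\rfloor\ (\ge2)$ and define $$\Phi(x)=x\log x+xA(x)\log\bigl(xA(x)\bigr)+x\sum_{j=1}^{n-1}\log(1-jx),\qquad f(x)=-w(x)-x\,w(A(x))-\Phi(x).$$ Let $\tilde f$ be the odd $1$-periodic extension of $f$ to $\mathbf{R}\setminus\mathbf{Q}$: for irrational $x$, $\tilde f(x)=f(\{x\})$ if $\{x\}\in(0,\tfrac12)$ and $\tilde f(x)=-f(1-\{x\})$ if $\{x\}\in(\tfrac12,1)$, where $\{x\}=x-\lfloor x\rfloor$. *)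

From Stdlib Require Import Reals Lra ZArith.
Open Scope R_scope.

Definition irrational (x : R) : Prop :=
  ~ exists (p q : Z), q <> 0%Z /\ x = IZR p / IZR q.

Definition floorR (x : R) : R := IZR (Int_part x).

Definition gaussA (y : R) : R := / y - floorR (/ y).

(* w on (0,1/2) *)
Definition w0 (y : R) : R := y / 2 * ln ((1 - y) / y) - ln (1 - y).

(* even 1-periodic extension of w0 (meaningful on irrationals) *)
Definition w (y : R) : R :=
  let t := y - floorR y in
  if Rlt_dec t (1/2) then w0 t else w0 (1 - t).

Fixpoint sumlog (x : R) (m : nat) : R :=
  match m with
  | O => 0
  | S k => sumlog x k + ln (1 - INR (S k) * x)
  end.

Definition nfloor (x : R) : nat := Z.to_nat (Int_part (/ x)).

Definition Phi (x : R) : R :=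
  x * ln x + x * gaussA x * ln (x * gaussA x) + x * sumlog x (nfloor x - 1).

Definition f (x : R) : R := - w x - x * w (gaussA x) - Phi x.

(* odd 1-periodic extension of f (meaningful on irrationals) *)
Definition ftilde (x : R) : R :=
  let t := x - floorR x in
  if Rlt_dec t (1/2) then f t else - f (1 - t).

(* Both [w] and [ftilde] are folded from a function on (0, 1/2) with breakpoints in (1/2)Z,
   so near an irrational point each is a single branch.  Near an irrational t > 0, f agrees
   with the expression obtained by freezing floor (1 / t), which is continuous because the
   arguments t and A t of [w] are irrational.  Near 0, x * sum_j ln (1 - j x) is a Riemann sum
   of the integral of ln (1 - t) over [0, 1], which is -1, and every other term of f is
   O (sqrt x).  Near 1/2, floor (1 / x) = 2 and A x -> 0, so f differs by o(1) from
   - w0 x - x ln x - x ln (1 - x), which is continuous and vanishes at 1/2. *)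

From Stdlib Require Import Reals Lra Lia ZArith.
From Coquelicot Require Import Coquelicot.
Open Scope R_scope.

Lemma ln_le_sub1 (y : R) : 0 < y -> ln y <= y - 1.
Proof.
  intros Hy. pose proof (exp_ineq1_le (ln y)) as H. rewrite exp_ln in H; lra.
Qed.

Lemma one_sub_inv_le_ln (y : R) : 0 < y -> 1 - / y <= ln y.
Proof.
  intros Hy. pose proof (ln_le_sub1 (/ y) (Rinv_0_lt_compat _ Hy)) as H.
  rewrite ln_Rinv in H; lra.
Qed.

Lemma sqrt_le_of_le_square (y z : R) : 0 <= y -> 0 <= z -> y <= z * z -> sqrt y <= z.
Proof. intros Hy Hz Hyz. rewrite <- (sqrt_square z) by exact Hz. apply sqrt_le_1_alt; lra. Qed.

Lemma le_sqrt (x : R) : 0 <= x <= 1 -> x <= sqrt x.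
Proof.
  intros Hx. assert (Hs1 : sqrt x <= 1) by (rewrite <- sqrt_1; apply sqrt_le_1_alt; lra).
  pose proof (sqrt_sqrt x ltac:(lra)). pose proof (sqrt_pos x). nra.
Qed.

Lemma xlnx_bounds (v : R) : 0 < v <= 1 -> - (2 * sqrt v) <= v * ln v <= 0.
Proof.
  intros Hv. set (s := sqrt v).
  assert (Hs : 0 < s) by (apply sqrt_lt_R0; lra).
  assert (Hs1 : s <= 1) by (unfold s; rewrite <- sqrt_1; apply sqrt_le_1_alt; lra).
  assert (Hss : s * s = v) by (apply sqrt_sqrt; lra).
  assert (Hln : ln v <= 0) by (rewrite <- ln_1; apply ln_le; lra).
  assert (Hlns : 1 - / s <= ln s) by (apply one_sub_inv_le_ln; exact Hs).
  assert (Hv_ln : v * ln v = 2 * s * (s * ln s)).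
  { rewrite <- Hss, ln_mult by lra. ring. }
  assert (Hslns : s - 1 <= s * ln s).
  { replace (s - 1) with (s * (1 - / s)) by (field; lra). apply Rmult_le_compat_l; lra. }
  split; nra.
Qed.

Lemma ln_one_sub_bounds (y : R) : 0 <= y <= 1/2 -> - (2 * y) <= ln (1 - y) <= 0.
Proof.
  intros Hy. split.
  - assert (Hinv : / (1 - y) <= 1 + 2 * y).
    { apply (Rmult_le_reg_l (1 - y)); [lra|]. rewrite Rinv_r by lra. nra. }
    pose proof (one_sub_inv_le_ln (1 - y) ltac:(lra)). lra.
  - rewrite <- ln_1. apply ln_le; lra.
Qed.

Lemma w0_bounds (y : R) : 0 < y <= 1/2 -> - (4 * sqrt y) <= w0 y <= 4 * sqrt y.
Proof.
  intros Hy. unfold w0. rewrite ln_div by lra.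
  pose proof (xlnx_bounds y ltac:(lra)). pose proof (ln_one_sub_bounds y ltac:(lra)).
  pose proof (le_sqrt y ltac:(lra)).
  replace (y / 2 * (ln (1 - y) - ln y)) with ((y * ln (1 - y)) / 2 - (y * ln y) / 2) by field.
  nra.
Qed.

Lemma w0_bounds_4 (y : R) : 0 < y <= 1/2 -> -4 <= w0 y <= 4.
Proof.
  intros Hy. pose proof (w0_bounds y Hy).
  assert (sqrt y <= 1) by (rewrite <- sqrt_1; apply sqrt_le_1_alt; lra). lra.
Qed.

Lemma irrational_neq_IZR (x : R) (k : Z) : irrational x -> x <> IZR k.
Proof. intros Hx E. apply Hx. exists k, 1%Z. split; [lia|]. rewrite E. field. Qed.

Lemma irrational_neq_half (x : R) : irrational x -> x <> 1/2.
Proof. intros Hx E. apply Hx. exists 1%Z, 2%Z. split; [lia|]. rewrite E. reflexivity. Qed.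

Lemma irrational_sub_IZR (x : R) (k : Z) : irrational x -> irrational (x - IZR k).
Proof.
  intros Hx [p [q [Hq E]]]. apply Hx. exists (p + k * q)%Z, q. split; [exact Hq|].
  rewrite plus_IZR, mult_IZR. replace x with ((x - IZR k) + IZR k) by ring. rewrite E.
  field. apply not_0_IZR; exact Hq.
Qed.

Lemma irrational_one_sub (x : R) : irrational x -> irrational (1 - x).
Proof.
  intros Hx [p [q [Hq E]]]. apply Hx. exists (q - p)%Z, q. split; [exact Hq|].
  rewrite minus_IZR. replace x with (1 - (1 - x)) by ring. rewrite E.
  field. apply not_0_IZR; exact Hq.
Qed.

Lemma irrational_inv (x : R) : irrational x -> irrational (/ x).
Proof.
  intros Hx [p [q [Hq E]]].
  assert (Hx0 : x <> 0) by exact (irrational_neq_IZR x 0 Hx).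
  assert (Hp : p <> 0%Z).
  { intros ->. rewrite Rdiv_0_l in E. exact (Rinv_neq_0_compat x Hx0 E). }
  apply Hx. exists q, p. split; [exact Hp|].
  rewrite <- (Rinv_inv x), E. field. split; apply not_0_IZR; assumption.
Qed.

Lemma Int_part_bounds (r : R) : IZR (Int_part r) <= r < IZR (Int_part r) + 1.
Proof. pose proof (base_Int_part r). lra. Qed.

Lemma Int_part_eq (r : R) (k : Z) : IZR k <= r < IZR k + 1 -> Int_part r = k.
Proof. intros Hr. symmetry. apply Int_part_spec. lra. Qed.

Lemma Int_part_lt_irrational (r : R) : irrational r ->
  IZR (Int_part r) < r < IZR (Int_part r) + 1.
Proof.
  intros Hr. pose proof (Int_part_bounds r).
  pose proof (irrational_neq_IZR r (Int_part r) Hr). lra.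
Qed.

Lemma locally_between (h : R -> R) (x0 a c : R) :
  continuous h x0 -> a < h x0 < c -> @locally R_UniformSpace x0 (fun x => a < h x < c).
Proof.
  intros Hh [Ha Hc]. exact (filter_and _ _ (Hh _ (open_gt a _ Ha)) (Hh _ (open_lt c _ Hc))).
Qed.

Lemma continuous_eps_delta (h : R -> R) (x0 : R) : continuous h x0 ->
  forall eps, eps > 0 -> exists delta, delta > 0 /\
    forall x, Rabs (x - x0) < delta -> Rabs (h x - h x0) < eps.
Proof.
  intros Hh eps Heps.
  destruct (proj1 (filterlim_locally h (h x0)) Hh (mkposreal eps Heps)) as [delta Hd].
  exists delta. split; [apply cond_pos | exact Hd].
Qed.

(* [ex_derive_continuous] specialized to [R]: [apply] cannot infer its normed module. *)
Lemma continuous_of_ex_derive (h : R -> R) (x : R) : ex_derive h x -> continuous h x.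
Proof. exact (ex_derive_continuous h x). Qed.

(* [w] is [fold_half w0 w0] and [ftilde] is [fold_half f (fun y => - f y)], by conversion. *)
Definition fold_half (g h : R -> R) (x : R) : R :=
  let t := x - floorR x in if Rlt_dec t (1/2) then g t else h (1 - t).

Lemma fold_half_on_cell (g h : R -> R) (k : Z) (x : R) : IZR k <= x < IZR k + 1 ->
  fold_half g h x = if Rlt_dec (x - IZR k) (1/2) then g (x - IZR k) else h (1 - (x - IZR k)).
Proof. intros Hx. unfold fold_half, floorR. rewrite (Int_part_eq x k Hx). reflexivity. Qed.

Lemma fold_half_left (g h : R -> R) (y : R) : 0 <= y < 1/2 -> fold_half g h y = g y.
Proof.
  intros Hy. rewrite (fold_half_on_cell g h 0) by (simpl; lra). simpl IZR.
  rewrite Rminus_0_r. destruct (Rlt_dec y (1/2)); [reflexivity | lra].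
Qed.

Lemma continuous_fold_half (g h : R -> R) (x0 : R) : irrational x0 ->
  (forall t, irrational t -> 0 < t < 1/2 -> continuous g t) ->
  (forall t, irrational t -> 0 < t < 1/2 -> continuous h t) ->
  continuous (fold_half g h) x0.
Proof.
  intros Hx0 Hg Hh. set (k := Int_part x0).
  pose proof (Int_part_lt_irrational x0 Hx0) as Hk. fold k in Hk.
  assert (Ht : irrational (x0 - IZR k)) by (apply irrational_sub_IZR; exact Hx0).
  pose proof (irrational_neq_half _ Ht).
  assert (Hid := continuous_id x0).
  destruct (Rlt_dec (x0 - IZR k) (1/2)) as [Hlt | Hge].
  - apply (continuous_ext_loc _ (fun x => g (x - IZR k))).
    + apply (filter_imp (fun x => IZR k < x < IZR k + 1/2)).
      * intros x Hx. rewrite (fold_half_on_cell g h k) by lra.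
        destruct (Rlt_dec (x - IZR k) (1/2)); [reflexivity | lra].
      * apply (locally_between (fun x => x)); [exact Hid | lra].
    + refine (continuous_comp (fun x => x - IZR k) g x0 _ _).
      * apply continuous_of_ex_derive. auto_derive. exact I.
      * apply Hg; [exact Ht | lra].
  - apply (continuous_ext_loc _ (fun x => h (1 - (x - IZR k)))).
    + apply (filter_imp (fun x => IZR k + 1/2 < x < IZR k + 1)).
      * intros x Hx. rewrite (fold_half_on_cell g h k) by lra.
        destruct (Rlt_dec (x - IZR k) (1/2)); [lra | reflexivity].
      * apply (locally_between (fun x => x)); [exact Hid | lra].
    + refine (continuous_comp (fun x => 1 - (x - IZR k)) h x0 _ _).
      * apply continuous_of_ex_derive. auto_derive. exact I.
      * apply Hh; [apply irrational_one_sub; exact Ht | lra].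
Qed.

Lemma continuous_w0 (t : R) : 0 < t < 1 -> continuous w0 t.
Proof.
  intros Ht. apply continuous_of_ex_derive. unfold w0. auto_derive.
  repeat split; try lra. apply Rdiv_lt_0_compat; lra.
Qed.

Lemma continuous_w_irrational (y : R) : irrational y -> continuous w y.
Proof.
  intros Hy. apply (continuous_fold_half w0 w0 y Hy);
    intros t _ Ht; apply continuous_w0; lra.
Qed.

Lemma w_eq_w0 (y : R) : 0 <= y < 1/2 -> w y = w0 y.
Proof. exact (fold_half_left w0 w0 y). Qed.

Lemma w_bounds (y : R) : 0 < y < 1 -> -4 <= w y <= 4.
Proof.
  intros Hy. change (w y) with (fold_half w0 w0 y).
  rewrite (fold_half_on_cell w0 w0 0) by (simpl; lra). simpl IZR. rewrite Rminus_0_r.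
  destruct (Rlt_dec y (1/2)); apply w0_bounds_4; lra.
Qed.

(* [f] with [floor (1 / t)] frozen at [K]; [f t] is [f_frozen (Int_part (/ t)) t] by conversion. *)
Definition Phi_frozen (K : Z) (t : R) : R :=
  t * ln t + t * (/ t - IZR K) * ln (t * (/ t - IZR K)) + t * sumlog t (Z.to_nat K - 1).

Definition f_frozen (K : Z) (t : R) : R := - w t - t * w (/ t - IZR K) - Phi_frozen K t.

Lemma f_eq_f_frozen (K : Z) (t : R) : Int_part (/ t) = K -> f t = f_frozen K t.
Proof. intros <-. reflexivity. Qed.

Lemma ex_derive_sumlog (m : nat) (t0 : R) : 0 < t0 -> INR m * t0 < 1 ->
  ex_derive (fun t => sumlog t m) t0.
Proof.
  induction m as [| m IHm]; intros Ht0 Hm.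
  - apply (ex_derive_ext (fun _ => 0)); [reflexivity | auto_derive; exact I].
  - rewrite S_INR in Hm.
    apply (ex_derive_plus (fun t => sumlog t m) (fun t => ln (1 - INR (S m) * t))).
    + apply IHm; [exact Ht0 | pose proof (pos_INR m); nra].
    + rewrite S_INR. auto_derive. lra.
Qed.

Lemma ex_derive_Phi_frozen (K : Z) (t0 : R) : 0 < t0 -> IZR K < / t0 < IZR K + 1 ->
  ex_derive (Phi_frozen K) t0.
Proof.
  intros Ht0 HK.
  assert (Hpos : 0 < t0 * (/ t0 - IZR K)) by (apply Rmult_lt_0_compat; lra).
  assert (HK0 : (0 <= K)%Z).
  { assert (HKm1 : (-1 < K)%Z) by (apply lt_IZR; pose proof (Rinv_0_lt_compat t0 Ht0); simpl; lra).
    lia. }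
  assert (Hm : INR (Z.to_nat K - 1) * t0 < 1).
  { assert (Hle : INR (Z.to_nat K - 1) <= IZR K).
    { rewrite INR_IZR_INZ. apply IZR_le. lia. }
    assert (IZR K * t0 < 1).
    { apply (Rmult_lt_reg_r (/ t0)); [apply Rinv_0_lt_compat; lra |].
      rewrite Rmult_assoc, Rinv_r by lra. lra. }
    pose proof (pos_INR (Z.to_nat K - 1)). nra. }
  unfold Phi_frozen.
  apply (ex_derive_plus (fun t => t * ln t + t * (/ t - IZR K) * ln (t * (/ t - IZR K)))
    (fun t => t * sumlog t (Z.to_nat K - 1))).
  - auto_derive. repeat split; lra.
  - apply (ex_derive_mult (fun t => t) (fun t => sumlog t (Z.to_nat K - 1))).
    + apply ex_derive_id.
    + apply ex_derive_sumlog; assumption.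
Qed.

Lemma continuous_f_frozen (K : Z) (t0 : R) : irrational t0 -> 0 < t0 ->
  IZR K < / t0 < IZR K + 1 -> continuous (f_frozen K) t0.
Proof.
  intros Hirr Ht0 HK.
  assert (Hu : continuous w (/ t0 - IZR K)).
  { apply continuous_w_irrational, irrational_sub_IZR, irrational_inv. exact Hirr. }
  unfold f_frozen.
  apply (continuous_minus (fun t => - w t - t * w (/ t - IZR K)) (Phi_frozen K)).
  - apply (continuous_minus (fun t => - w t) (fun t => t * w (/ t - IZR K))).
    + apply (continuous_opp w). apply continuous_w_irrational. exact Hirr.
    + apply (continuous_mult (fun t => t) (fun t => w (/ t - IZR K))); [apply continuous_id |].
      refine (continuous_comp (fun t => / t - IZR K) w t0 _ Hu).
      apply continuous_of_ex_derive. auto_derive. lra.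
  - apply continuous_of_ex_derive, ex_derive_Phi_frozen; assumption.
Qed.

Lemma continuous_f_irrational (t0 : R) : irrational t0 -> 0 < t0 -> continuous f t0.
Proof.
  intros Hirr Ht0. set (K := Int_part (/ t0)).
  pose proof (Int_part_lt_irrational (/ t0) (irrational_inv t0 Hirr)) as HK. fold K in HK.
  apply (continuous_ext_loc _ (f_frozen K)).
  - apply (filter_imp (fun t => 0 < t < t0 + 1 /\ IZR K < / t < IZR K + 1)).
    + intros t [Ht HKt]. symmetry. apply f_eq_f_frozen, Int_part_eq. lra.
    + apply filter_and.
      * apply (locally_between (fun t => t) t0 0 (t0 + 1)); [apply continuous_id | lra].
      * apply (locally_between (fun t => / t)); [|exact HK].
        apply continuous_of_ex_derive. auto_derive. lra.
  - apply continuous_f_frozen; assumption.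
Qed.

Lemma continuous_ftilde_irrational (x0 : R) : irrational x0 -> continuous ftilde x0.
Proof.
  intros Hx0. apply (continuous_fold_half f (fun y => - f y) x0 Hx0).
  - intros t Ht Ht2. apply continuous_f_irrational; [exact Ht | lra].
  - intros t Ht Ht2. apply (continuous_opp f). apply continuous_f_irrational; [exact Ht | lra].
Qed.

Definition ln_one_sub_primitive (t : R) : R := - (1 - t) * ln (1 - t) - t.

Lemma xlnx_increment_bounds (c x : R) : 0 < c -> 0 < x ->
  x * ln c <= (c + x) * ln (c + x) - c * ln c - x <= x * ln (c + x).
Proof.
  intros Hc Hx. set (a := c + x).
  pose proof (ln_le_sub1 (c / a) ltac:(apply Rdiv_lt_0_compat; unfold a; lra)) as Hca.
  pose proof (ln_le_sub1 (a / c) ltac:(apply Rdiv_lt_0_compat; unfold a; lra)) as Hac.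
  rewrite ln_div in Hca, Hac by (unfold a; lra).
  assert (a * (c / a - 1) = c - a) by (field; unfold a; lra).
  assert (c * (a / c - 1) = a - c) by (field; lra).
  assert (a * (ln a - ln c) >= a - c) by (unfold a in *; nra).
  assert (c * (ln a - ln c) <= a - c) by nra.
  unfold a in *. split; nra.
Qed.

(* The Riemann sum [x * sum_{j=1}^m ln (1 - j x)] of the decreasing function [ln (1 - t)]
   lies between its integrals over [[x, (m+1) x]] and [[0, m x]]. *)
Lemma sumlog_bounds (m : nat) (x : R) : 0 < x -> (INR m + 1) * x < 1 ->
  ln_one_sub_primitive ((INR m + 1) * x) - ln_one_sub_primitive x <= x * sumlog x m
  <= ln_one_sub_primitive (INR m * x).
Proof.
  induction m as [| m IHm]; intros Hx Hm; unfold ln_one_sub_primitive in *.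
  - simpl. replace (1 - 0 * x) with 1 by ring. replace ((0 + 1) * x) with x by ring.
    rewrite ln_1. lra.
  - change (sumlog x (S m)) with (sumlog x m + ln (1 - INR (S m) * x)).
    rewrite !S_INR in *.
    assert (Hm' : (INR m + 1) * x < 1) by (pose proof (pos_INR m); nra).
    specialize (IHm Hx Hm').
    pose proof (xlnx_increment_bounds (1 - (INR m + 1) * x) x ltac:(lra) Hx) as HA.
    pose proof (xlnx_increment_bounds (1 - (INR m + 1 + 1) * x) x ltac:(lra) Hx) as HB.
    replace (1 - (INR m + 1) * x + x) with (1 - INR m * x) in HA by ring.
    replace (1 - (INR m + 1 + 1) * x + x) with (1 - (INR m + 1) * x) in HB by ring.
    rewrite Rmult_plus_distr_l. lra.
Qed.

Lemma x_sumlog_near_minus_one (m : nat) (x : R) : 0 < x <= 1/4 ->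
  0 < 1 - (INR m + 1) * x < x -> -1 - 6 * sqrt x <= x * sumlog x m <= -1 + 6 * sqrt x.
Proof.
  intros Hx Hv. set (v := 1 - (INR m + 1) * x) in Hv.
  pose proof (sumlog_bounds m x ltac:(lra) ltac:(unfold v in Hv; lra)) as Hsum.
  unfold ln_one_sub_primitive in Hsum.
  replace ((INR m + 1) * x) with (1 - v) in Hsum by (unfold v; ring).
  replace (INR m * x) with (1 - v - x) in Hsum by (unfold v; ring).
  replace (1 - (1 - v)) with v in Hsum by ring.
  replace (1 - (1 - v - x)) with (v + x) in Hsum by ring.
  pose proof (xlnx_bounds v ltac:(lra)).
  pose proof (xlnx_bounds (v + x) ltac:(lra)).
  assert (sqrt (v + x) <= 2 * sqrt x).
  { apply sqrt_le_of_le_square; [lra | pose proof (sqrt_pos x); lra |].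
    pose proof (sqrt_sqrt x ltac:(lra)). nra. }
  pose proof (ln_one_sub_bounds x ltac:(lra)).
  assert (- (2 * x) <= (1 - x) * ln (1 - x)) by nra.
  pose proof (le_sqrt x ltac:(lra)).
  lra.
Qed.

Lemma f_near_zero (x : R) : 0 < x < 1/4 -> / x <> IZR (Int_part (/ x)) ->
  Rabs (f x - 1) <= 18 * sqrt x.
Proof.
  intros Hx Hnint. set (K := Int_part (/ x)) in Hnint.
  pose proof (Int_part_bounds (/ x)) as HK. fold K in HK.
  assert (Hix : 4 < / x).
  { apply (Rmult_lt_reg_l x); [lra |]. rewrite Rinv_r by lra. lra. }
  assert (HK1 : (1 <= K)%Z) by (apply le_IZR; lra).
  assert (Hm : INR (Z.to_nat K - 1) + 1 = IZR K).
  { rewrite minus_INR by lia. rewrite INR_IZR_INZ, Z2Nat.id by lia. simpl. ring. }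
  rewrite (f_eq_f_frozen K x) by reflexivity. unfold f_frozen, Phi_frozen.
  rewrite w_eq_w0 by lra.
  set (u := / x - IZR K). set (v := x * u).
  assert (Hu : 0 < u < 1) by (unfold u; lra).
  assert (Hv : v = 1 - IZR K * x) by (unfold v, u; field; lra).
  assert (Hv0 : 0 < v < x) by (unfold v; split; [apply Rmult_lt_0_compat |]; nra).
  pose proof (w0_bounds x ltac:(lra)).
  pose proof (w_bounds u Hu).
  assert (- (4 * x) <= x * w u <= 4 * x) by (split; nra).
  pose proof (le_sqrt x ltac:(lra)).
  pose proof (xlnx_bounds x ltac:(lra)).
  pose proof (xlnx_bounds v ltac:(lra)).
  assert (sqrt v <= sqrt x) by (apply sqrt_le_1_alt; lra).
  pose proof (x_sumlog_near_minus_one (Z.to_nat K - 1) x ltac:(lra) ltac:(rewrite Hm; lra)).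
  apply Rabs_le. lra.
Qed.

Lemma ftilde_eq_f (x : R) : 0 <= x < 1/2 -> ftilde x = f x.
Proof. exact (fold_half_left f (fun y => - f y) x). Qed.

Lemma ftilde_right_lim_0 (eps : R) : eps > 0 -> exists delta, delta > 0 /\
  forall x, irrational x -> 0 < x < delta -> Rabs (ftilde x - 1) < eps.
Proof.
  intros Heps. exists (Rmin (1/4) ((eps / 19) * (eps / 19))). split.
  { apply Rmin_pos; [lra | apply Rmult_lt_0_compat; lra]. }
  intros x Hirr Hx.
  pose proof (Rmin_l (1/4) ((eps / 19) * (eps / 19))).
  pose proof (Rmin_r (1/4) ((eps / 19) * (eps / 19))).
  rewrite ftilde_eq_f by lra.
  assert (sqrt x <= eps / 19) by (apply sqrt_le_of_le_square; lra).
  pose proof (f_near_zero x ltac:(lra)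
    (irrational_neq_IZR _ (Int_part (/ x)) (irrational_inv x Hirr))).
  lra.
Qed.

Definition f_near_half_main (x : R) : R := - w0 x - x * ln x - x * ln (1 - x).

Lemma continuous_f_near_half_main : continuous f_near_half_main (1/2).
Proof.
  apply continuous_of_ex_derive. unfold f_near_half_main, w0. auto_derive.
  repeat split; lra.
Qed.

Lemma f_near_half_main_half : f_near_half_main (1/2) = 0.
Proof.
  unfold f_near_half_main, w0.
  replace ((1 - 1/2) / (1/2)) with 1 by field. replace (1 - 1/2) with (1/2) by field.
  rewrite ln_1. lra.
Qed.

Lemma f_near_half (x : R) : 2/5 < x < 1/2 ->
  Rabs (f x - f_near_half_main x) <= 6 * sqrt (/ x - 2).
Proof.
  intros Hx.
  assert (Hix : 2 < / x < 5/2).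
  { split; apply (Rmult_lt_reg_l x); try lra; rewrite Rinv_r by lra; lra. }
  rewrite (f_eq_f_frozen 2 x) by (apply Int_part_eq; lra).
  unfold f_frozen, Phi_frozen, f_near_half_main.
  assert (Hsum : sumlog x (Z.to_nat 2 - 1) = ln (1 - x)).
  { simpl. rewrite Rplus_0_l, Rmult_1_l. reflexivity. }
  rewrite Hsum, !w_eq_w0 by lra.
  set (u := / x - 2). set (v := x * u).
  assert (Hu : 0 < u < 1/2) by (unfold u; lra).
  assert (Hv : 0 < v <= u) by (unfold v; split; [apply Rmult_lt_0_compat |]; nra).
  pose proof (w0_bounds u ltac:(lra)). pose proof (sqrt_pos u).
  assert (- (4 * sqrt u) <= x * w0 u <= 4 * sqrt u) by (split; nra).
  pose proof (xlnx_bounds v ltac:(lra)).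
  assert (sqrt v <= sqrt u) by (apply sqrt_le_1_alt; lra).
  apply Rabs_le. lra.
Qed.

Lemma ftilde_left_lim_half (eps : R) : eps > 0 -> exists delta, delta > 0 /\
  forall x, irrational x -> 1/2 - delta < x < 1/2 -> Rabs (ftilde x) < eps.
Proof.
  intros Heps.
  destruct (continuous_eps_delta _ _ continuous_f_near_half_main (eps / 2) ltac:(lra))
    as [d [Hd Hmain]].
  rewrite f_near_half_main_half in Hmain.
  set (r := (eps / 13) * (eps / 13) / 5).
  assert (Hr : 0 < r) by (unfold r; apply Rdiv_lt_0_compat; [apply Rmult_lt_0_compat |]; lra).
  exists (Rmin (1/10) (Rmin d r)). split.
  { apply Rmin_pos; [lra | apply Rmin_pos; lra]. }
  intros x _ Hx.
  pose proof (Rmin_l (1/10) (Rmin d r)). pose proof (Rmin_r (1/10) (Rmin d r)).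
  pose proof (Rmin_l d r). pose proof (Rmin_r d r).
  rewrite ftilde_eq_f by lra.
  assert (Hu0 : 0 < / x - 2).
  { apply (Rmult_lt_reg_l x); [lra |]. rewrite Rmult_minus_distr_l, Rinv_r by lra. lra. }
  assert (Hu : / x - 2 <= 5 * (1/2 - x)).
  { assert ((/ x - 2) * x = 1 - 2 * x) by (field; lra). nra. }
  assert (sqrt (/ x - 2) <= eps / 13) by (apply sqrt_le_of_le_square; unfold r in *; lra).
  pose proof (f_near_half x ltac:(lra)).
  specialize (Hmain x ltac:(apply Rabs_def1; lra)). rewrite Rminus_0_r in Hmain.
  replace (f x) with ((f x - f_near_half_main x) + f_near_half_main x) by ring.
  eapply Rle_lt_trans; [apply Rabs_triang | lra].
Qed.

Theorem mainTheorem6 :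
  (forall x0 : R, irrational x0 ->
     forall eps : R, eps > 0 -> exists delta : R, delta > 0 /\
       forall x : R, irrational x -> Rabs (x - x0) < delta ->
         Rabs (ftilde x - ftilde x0) < eps) /\
  (forall eps : R, eps > 0 -> exists delta : R, delta > 0 /\
     forall x : R, irrational x -> 0 < x < delta ->
       Rabs (ftilde x - 1) < eps) /\
  (forall eps : R, eps > 0 -> exists delta : R, delta > 0 /\
     forall x : R, irrational x -> 1/2 - delta < x < 1/2 ->
       Rabs (ftilde x) < eps).
Proof.
  split; [| split; [exact ftilde_right_lim_0 | exact ftilde_left_lim_half]].
  intros x0 Hx0 eps Heps.
  destruct (continuous_eps_delta ftilde x0 (continuous_ftilde_irrational x0 Hx0) eps Heps)
    as [delta [Hdelta Hclose]].
  exists delta. split; [exact Hdelta |]. intros x _. exact (Hclose x).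
Qed.
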